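(* Consider a run of \texttt{SequOOL} with budget $n$ on $f$ with deterministic feedback, and let $h_{\max}=\lfloor n/\bar\log n\rfloor$. Let $x^\star$ be a global optimum of $f$ with associated $(\nu,\rho)$, let $C>1$, and write $d=d(\nu,C,\rho)$. For any depth $h\in[h_{\max}]$, if \[ \frac{h_{\max}}{h}\ \ge\ C\rho^{-d h}, \] then $\bot_h=h$, with the convention $\bot_0=0$.
   Context: Let $\mathcal X$ be a set and $f:\mathcal X\to\mathbb R$ a function attaining its supremum; a point $x^\star$ with $f(x^\star)=\sup_{x\in\mathcal X}f(x)$ is a global optimum. Hierarchical partitioning $\mathcal P=\{\mathcal P_{h,i}\}$: - for every depth $h\ge 0$, the cells $\{\mathcal P_{h,i}\}_{1\le i\le I_h}$ form a partition of $\mathcal X$, and $\mathcal P_{0,1}=\mathcal X$; - each cell $\mathcal P_{h,i}$ is partitioned into finitely many children cells of depth $h+1$; - each cell has a fixed representative point $x_{h,i}\in\mathcal P_{h,i}$, and we write $f_{h,i}=f(x_{h,i})$; - for a global optimum $x^\star$, $i^\star_h$ is the index of the unique depth-$h$ cell containing $x^\star$. Local smoothness: a global optimum $x^\star$ has associated $(\nu,\rho)$, with $\nu>0$ and $\rho\in(0,1)$, if for all $h\in\mathbb N$ and all $x\in\mathcal P_{h,i^\star_h}$ we have $f(x)\ge f(x^\star)-\nu\rho^h$. Near-optimality dimension: for $\nu>0$, $C>1$, $\rho\in(0,1)$, let $\mathcal N_h(\epsilon)$ be the number of depth-$h$ cells $\mathcal P_{h,i}$ with $\sup_{x\in\mathcal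 P_{h,i}}f(x)\ge f(x^\star)-\epsilon$. Define \[ d(\nu,C,\rho)=\inf\{d'\ge 0:\ \forall h\ge 0,\ \mathcal N_h(3\nu\rho^h)\le C\rho^{-d'h}\}, \] which is assumed finite. Notation: $\bar\log n=\sum_{t=1}^n 1/t$ (the $n$-th harmonic number), and $[a]=\{1,\dots,a\}$. Deterministic feedback: evaluating a cell $\mathcal P_{h,i}$ returns $f_{h,i}$ exactly. Opening a cell means evaluating each of its children cells once. \texttt{SequOOL} with budget $n$: set $h_{\max}=\lfloor n/\bar\log n\rfloor$ and open $\mathcal P_{0,1}$. Then, for $h=1,2,\dots,h_{\max}$ in increasing order, open the $\lfloor h_{\max}/h\rfloor$ depth-$h$ cells having the largest values $f_{h,j}$ among the evaluated depth-$h$ cells (or all of them if there are fewer). Finally, output $x(n)$, a representative point $x_{h,i}$ of an evaluated cell maximizing $f_{h,i}$. $\bot_h$ is the depth of the deepest opened cell containing $x^\star$ at the end of iteration $h$ of the loop. *)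

From Stdlib Require Import Reals Lra Lia List Arith ZArith ClassicalEpsilon.
Import ListNotations.
Open Scope R_scope.

(* Depth-h cells are indexed by i in [1, I h]; cell P_{h,i} = {x | idx h x = i}.
   par h j = index (at depth h) of the parent of the depth-(h+1) cell j.
   rep h i = representative point x_{h,i} of cell P_{h,i}. *)
Record HPart (X : Type) := {
  I : nat -> nat;
  idx : nat -> X -> nat;
  par : nat -> nat -> nat;
  rep : nat -> nat -> X;
  I_root : I 0%nat = 1%nat;
  idx_range : forall h x, (1 <= idx h x <= I h)%nat;
  par_ok : forall h x, par h (idx (S h) x) = idx h x;
  rep_in : forall h i, (1 <= i <= I h)%nat -> idx h (rep h i) = i
}.
Arguments I {X}. Arguments idx {X}. Arguments par {X}. Arguments rep {X}.

Definition in_cell {X} (P : HPart X) (h i : nat) (x : X) : Prop := idx P h x = i.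

Definition fval {X} (P : HPart X) (f : X -> R) (h i : nat) : R := f (rep P h i).

(* n-th harmonic number  \bar log n = sum_{t=1}^n 1/t *)
Fixpoint harm (n : nat) : R :=
  match n with O => 0 | S m => harm m + / INR (S m) end.

Definition nfloor (r : R) : nat := Z.to_nat (Int_part r).

Definition hmax (n : nat) : nat := nfloor (INR n / harm n).

Definition global_opt {X} (f : X -> R) (xs : X) : Prop := forall x, f x <= f xs.

Definition local_smooth {X} (P : HPart X) (f : X -> R) (xs : X) (nu rho : R) : Prop :=
  forall (h : nat) (x : X), in_cell P h (idx P h xs) x -> f x >= f xs - nu * rho ^ h.

(* sup_{x in P_{h,i}} f x >= c : every upper bound of f on the cell is >= c *)
Definition sup_cell_ge {X} (P : HPart X) (f : X -> R) (h i : nat) (c : R) : Prop :=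
  forall u, (forall x, in_cell P h i x -> f x <= u) -> c <= u.

Definition pb (Q : Prop) : bool :=
  if excluded_middle_informative Q then true else false.

Definition Ncells {X} (P : HPart X) (f : X -> R) (xs : X) (h : nat) (eps : R) : nat :=
  length (filter (fun i => pb (sup_cell_ge P f h i (f xs - eps))) (seq 1 (I P h))).

Definition nod_set {X} (P : HPart X) (f : X -> R) (xs : X) (nu C rho : R) (d' : R) : Prop :=
  0 <= d' /\
  forall h : nat, INR (Ncells P f xs h (3 * nu * rho ^ h)) <= C * Rpower rho (- (d' * INR h)).

Definition is_inf (A : R -> Prop) (m : R) : Prop :=
  (forall a, A a -> m <= a) /\ (forall m', (forall a, A a -> m' <= a) -> m' <= m).

(* d = d(nu, C, rho) (this also encodes that it is finite) *)
Definition near_opt_dim {X} (P : HPart X) (f : X -> R) (xs : X) (nu C rho d : R) : Prop :=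
  is_inf (nod_set P f xs nu C rho) d.

(* Run of SequOOL: op h = list of indices of the depth-h cells opened. *)
(* depth-h cells evaluated (h >= 1): children of opened depth-(h-1) cells *)
Definition evaluated {X} (P : HPart X) (op : nat -> list nat) (h : nat) : list nat :=
  filter (fun j => existsb (Nat.eqb (par P (h - 1) j)) (op (h - 1)%nat)) (seq 1 (I P h)).

(* op is a (possible, arbitrary tie-breaking) run of SequOOL with budget n *)
Definition sequool_run {X} (P : HPart X) (f : X -> R) (n : nat) (op : nat -> list nat) : Prop :=
  op 0%nat = [1%nat] /\
  (forall h, (1 <= h <= hmax n)%nat ->
     NoDup (op h) /\
     incl (op h) (evaluated P op h) /\
     length (op h) = Nat.min (hmax n / h) (length (evaluated P op h)) /\
     (forall j k, In j (op h) -> In k (evaluated P op h) -> ~ In k (op h) ->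
        fval P f h k <= fval P f h j)) /\
  (forall h, (hmax n < h)%nat -> op h = []).

(* bot_h: depth of the deepest opened cell containing xs at end of iteration h
   (bot_0 = 0, the root being opened at initialization) *)
Fixpoint bot {X} (P : HPart X) (op : nat -> list nat) (xs : X) (h : nat) : nat :=
  match h with
  | O => O
  | S k => if existsb (Nat.eqb (idx P (S k) xs)) (op (S k)) then S k else bot P op xs k
  end.

(* If the optimal cell of depth h-1 is opened, its child containing x* is
   evaluated at depth h and, by local smoothness, has value at least
   f(x* ) - nu rho^h.  Were it not opened, the floor(h_max/h) opened cells would
   all beat it, giving floor(h_max/h) + 1 distinct cells of depth h that are
   3 nu rho^h-near-optimal; but there are at most C rho^(-d h) <= h_max/h of
   them.  Since the hypothesis on h propagates to every smaller depth, the
   optimal path is opened all the way down to depth h. *)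

From Stdlib Require Import Reals List Lra Lia ClassicalEpsilon.
Open Scope R_scope.

Lemma is_inf_exp_bound (A : R -> Prop) (d N C K : R) :
  is_inf A d -> 0 < C -> 0 < K ->
  (forall a, A a -> N <= C * exp (a * K)) -> N <= C * exp (d * K).
Proof.
  intros [_ Hglb] HC HK Hbound.
  apply Rnot_lt_le; intros HN.
  assert (HN0 : 0 < N) by (pose proof (exp_pos (d * K)); nra).
  set (d1 := ln (N / C) / K).
  assert (Hd1 : exp (d1 * K) = N / C).
  { unfold d1; replace (ln (N / C) / K * K) with (ln (N / C)) by (field; lra).
    apply exp_ln; unfold Rdiv; apply Rmult_lt_0_compat; [lra | now apply Rinv_0_lt_compat]. }
  assert (HC1 : C * exp (d1 * K) = N) by (rewrite Hd1; field; lra).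
  assert (Hlb : d1 <= d).
  { apply Hglb; intros a Ha; apply Rnot_lt_le; intros Hlt.
    assert (exp (a * K) < exp (d1 * K)) by (apply exp_increasing; nra).
    specialize (Hbound a Ha); nra. }
  assert (Hlt : d * K < d1 * K) by (apply exp_lt_inv; nra).
  nra.
Qed.

Lemma Rpower_Ropp_Rinv (x y : R) : 0 < x -> Rpower x (- y) = Rpower (/ x) y.
Proof. intros Hx; unfold Rpower; rewrite ln_Rinv by exact Hx; f_equal; ring. Qed.

Lemma budget_condition_antitone (m : nat) (C rho d : R) (k h : nat) :
  0 < rho < 1 -> 0 <= C -> 0 <= d -> (1 <= k <= h)%nat ->
  INR m / INR h >= C * Rpower rho (- (d * INR h)) ->
  INR m / INR k >= C * Rpower rho (- (d * INR k)).
Proof.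
  intros Hrho HC Hd Hkh Hcond.
  assert (Hk : 0 < INR k) by (apply lt_0_INR; lia).
  assert (Hle : INR k <= INR h) by (apply le_INR; lia).
  assert (Hdiv : INR m / INR h <= INR m / INR k).
  { unfold Rdiv; apply Rmult_le_compat_l; [apply pos_INR | now apply Rinv_le_contravar]. }
  assert (Hpow : Rpower rho (- (d * INR k)) <= Rpower rho (- (d * INR h))).
  { rewrite !Rpower_Ropp_Rinv by lra; apply Rle_Rpower.
    - rewrite <- Rinv_1; apply Rinv_le_contravar; lra.
    - now apply Rmult_le_compat_l. }
  assert (C * Rpower rho (- (d * INR k)) <= C * Rpower rho (- (d * INR h)))
    by now apply Rmult_le_compat_l.
  lra.
Qed.

Lemma INR_div_lt_succ (m k : nat) : (0 < k)%nat -> INR m / INR k < INR (m / k) + 1.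
Proof.
  intros Hk.
  assert (Hnat : (m < k * (m / k + 1))%nat).
  { rewrite Nat.mul_add_distr_l.
    pose proof (Nat.div_mod m k ltac:(lia)); pose proof (Nat.mod_upper_bound m k ltac:(lia)); lia. }
  apply lt_INR in Hnat; rewrite mult_INR, plus_INR in Hnat; change (INR 1) with 1 in Hnat.
  assert (HkR : 0 < INR k) by (apply lt_0_INR; lia).
  apply Rmult_lt_reg_r with (INR k); [exact HkR|].
  unfold Rdiv; rewrite Rmult_assoc, Rinv_l by lra; lra.
Qed.

Section Partition.

Variables (X : Type) (P : HPart X).

Lemma idx_root (x : X) : idx P 0 x = 1%nat.
Proof. pose proof (idx_range X P 0 x) as Hr; rewrite I_root in Hr; lia. Qed.

Lemma evaluated_range (op : nat -> list nat) (h j : nat) :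
  In j (evaluated P op h) -> (1 <= j <= I P h)%nat.
Proof. unfold evaluated; rewrite filter_In, in_seq; lia. Qed.

Lemma idx_evaluated (op : nat -> list nat) (k : nat) (x : X) :
  In (idx P k x) (op k) -> In (idx P (S k) x) (evaluated P op (S k)).
Proof.
  intros Hk; unfold evaluated; rewrite Nat.sub_succ, Nat.sub_0_r.
  apply filter_In; split.
  - pose proof (idx_range X P (S k) x); apply in_seq; lia.
  - apply existsb_exists; exists (idx P k x); split; [exact Hk|].
    rewrite par_ok; apply Nat.eqb_refl.
Qed.

Lemma bot_succ_of_opened (op : nat -> list nat) (xs : X) (k : nat) :
  In (idx P (S k) xs) (op (S k)) -> bot P op xs (S k) = S k.
Proof.
  intros Hin; simpl.
  replace (existsb (Nat.eqb (idx P (S k) xs)) (op (S k))) with true; [reflexivity|].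
  symmetry; apply existsb_exists; exists (idx P (S k) xs); split; [exact Hin | apply Nat.eqb_refl].
Qed.

Variables (f : X -> R) (xs : X).

Lemma local_smooth_rep (nu rho : R) (h : nat) :
  local_smooth P f xs nu rho -> f xs - nu * rho ^ h <= fval P f h (idx P h xs).
Proof.
  intros Hls; apply Rge_le, Hls; unfold in_cell.
  apply rep_in, idx_range.
Qed.

Lemma sup_cell_ge_rep (h j : nat) (c : R) :
  (1 <= j <= I P h)%nat -> c <= fval P f h j -> sup_cell_ge P f h j c.
Proof.
  intros Hj Hc u Hu; unfold fval in Hc.
  pose proof (Hu (rep P h j) (rep_in X P h j Hj)); lra.
Qed.

Lemma Ncells_ge_length (h : nat) (eps : R) (l : list nat) :
  NoDup l ->
  (forall j, In j l -> (1 <= j <= I P h)%nat /\ f xs - eps <= fval P f h j) ->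
  (length l <= Ncells P f xs h eps)%nat.
Proof.
  intros Hnd Hl; unfold Ncells; apply NoDup_incl_length; [exact Hnd|].
  intros j Hj; destruct (Hl j Hj) as [Hrange Hval].
  apply filter_In; split; [apply in_seq; lia|].
  unfold pb; destruct excluded_middle_informative as [|Hnot]; [reflexivity|].
  exfalso; now apply Hnot, sup_cell_ge_rep.
Qed.

Lemma near_opt_dim_nonneg (nu C rho d : R) :
  near_opt_dim P f xs nu C rho d -> 0 <= d.
Proof. intros [_ Hglb]; apply Hglb; now intros a [Ha _]. Qed.

Lemma Ncells_le_near_opt_dim (nu C rho d : R) (h : nat) :
  near_opt_dim P f xs nu C rho d -> 0 < rho < 1 -> 0 < C -> (1 <= h)%nat ->
  INR (Ncells P f xs h (3 * nu * rho ^ h)) <= C * Rpower rho (- (d * INR h)).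
Proof.
  intros Hd Hrho HC Hh.
  set (K := - (INR h * ln rho)).
  assert (HK : 0 < K).
  { assert (ln rho < 0) by (rewrite <- ln_1; apply ln_increasing; lra).
    assert (1 <= INR h) by (apply (le_INR 1); exact Hh).
    unfold K; nra. }
  assert (Hexp : forall a, Rpower rho (- (a * INR h)) = exp (a * K))
    by (intros a; unfold Rpower, K; f_equal; ring).
  rewrite Hexp; apply (is_inf_exp_bound _ _ _ _ _ Hd HC HK).
  intros a [_ Ha]; rewrite <- Hexp; apply Ha.
Qed.

Variables (n : nat) (op : nat -> list nat) (nu rho C d : R).
Hypotheses (Hrun : sequool_run P f n op) (Hnu : 0 < nu) (Hrho : 0 < rho < 1)
  (Hls : local_smooth P f xs nu rho) (HC : 1 < C) (Hd : near_opt_dim P f xs nu C rho d).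

Lemma sequool_opens_optimal_child (k : nat) :
  (S k <= hmax n)%nat -> In (idx P k xs) (op k) ->
  INR (hmax n) / INR (S k) >= C * Rpower rho (- (d * INR (S k))) ->
  In (idx P (S k) xs) (op (S k)).
Proof.
  intros Hk Hparent Hcond.
  set (h := S k) in *; set (i := idx P h xs); set (q := (hmax n / h)%nat).
  destruct Hrun as [_ [Hstep _]].
  destruct (Hstep h ltac:(lia)) as [Hnd [Hincl [Hlen Hbest]]].
  assert (Hev : In i (evaluated P op h)) by now apply idx_evaluated.
  destruct (In_dec Nat.eq_dec i (op h)) as [|Hni]; [assumption|exfalso].
  assert (Hnd' : NoDup (i :: op h)) by now constructor.
  assert (Hlenq : length (op h) = q).
  { assert (length (i :: op h) <= length (evaluated P op h))%nat.
    { apply NoDup_incl_length; [exact Hnd'|]; intros j [<-|Hj]; auto. }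
    simpl in *; unfold q; lia. }
  assert (Hfi := local_smooth_rep nu rho h Hls).
  assert (0 < rho ^ h) by (apply pow_lt; lra).
  assert (Hcount : (S q <= Ncells P f xs h (3 * nu * rho ^ h))%nat).
  { rewrite <- Hlenq; apply (Ncells_ge_length h _ (i :: op h) Hnd').
    intros j Hj; split.
    - apply (evaluated_range op); destruct Hj as [<-|Hj]; auto.
    - destruct Hj as [<-|Hj]; [fold i in Hfi; nra|].
      pose proof (Hbest j i Hj Hev Hni); fold i in Hfi; nra. }
  apply le_INR in Hcount; rewrite S_INR in Hcount.
  pose proof (Ncells_le_near_opt_dim nu C rho d h Hd Hrho ltac:(lra) ltac:(lia)).
  pose proof (INR_div_lt_succ (hmax n) h ltac:(lia)).
  unfold q in *; lra.
Qed.

Lemma sequool_opens_optimal_path (h : nat) :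
  (1 <= h <= hmax n)%nat ->
  INR (hmax n) / INR h >= C * Rpower rho (- (d * INR h)) ->
  forall k, (k <= h)%nat -> In (idx P k xs) (op k).
Proof.
  intros Hh Hcond; induction k as [|k IH]; intros Hk.
  - destruct Hrun as [Hroot _]; rewrite Hroot, idx_root; now left.
  - apply sequool_opens_optimal_child; [lia | apply IH; lia|].
    apply (budget_condition_antitone (hmax n) C rho d (S k) h Hrho ltac:(lra)); [|lia|exact Hcond].
    exact (near_opt_dim_nonneg nu C rho d Hd).
Qed.

End Partition.

Theorem lemma1 (X : Type) (P : HPart X) (f : X -> R) (n : nat) (op : nat -> list nat)
  (xs : X) (nu rho C d : R) (h : nat) :
  sequool_run P f n op ->
  global_opt f xs ->
  0 < nu -> 0 < rho < 1 ->
  local_smooth P f xs nu rho ->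
  1 < C ->
  near_opt_dim P f xs nu C rho d ->
  (1 <= h <= hmax n)%nat ->
  INR (hmax n) / INR h >= C * Rpower rho (- (d * INR h)) ->
  bot P op xs h = h.
Proof.
  intros Hrun _ Hnu Hrho Hls HC Hd Hh Hcond.
  destruct h as [|k]; [lia|].
  apply bot_succ_of_opened.
  exact (sequool_opens_optimal_path X P f xs n op nu rho C d
           Hrun Hnu Hrho Hls HC Hd (S k) Hh Hcond (S k) (le_n _)).
Qed.
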